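(* Let $n, N_D, p_1, p_2, r_1, r_2$ be positive integers with $p_1\le N_D$ and $p_2\le N_D$, let $(\boldsymbol{x}^{(i)}, y^{(i)}) \in \mathbb{R}^n\times\mathbb{R}$, $i\in\{1,\dots,N_D\}$, be data points, let $\boldsymbol{g}:\mathbb{R}^n\to\mathbb{R}^{r_1}$, $\boldsymbol{h}:\mathbb{R}^n\to\mathbb{R}^{r_2}$ be continuous, and let $M>0$. Consider the mixed-integer quadratic program $$\min_{\boldsymbol{V},\boldsymbol{W},\alpha^{(i)},\beta^{(i)},\boldsymbol{\gamma}^{(i)},\boldsymbol{\delta}^{(i)}} \sum_{i=1}^{N_D} \big(y^{(i)} - (\alpha^{(i)}-\beta^{(i)})\big)^2$$ over $\boldsymbol{V}\in\mathbb{R}^{p_1\times r_1}$, $\boldsymbol{W}\in\mathbb{R}^{p_2\times r_2}$, subject to, for all $i\in\{1,\dots,N_D\}$: $\alpha^{(i)},\beta^{(i)}\in\mathbb{R}$, $\boldsymbol{V}\boldsymbol{g}(\boldsymbol{x}^{(i)}) \le \boldsymbol{1}\alpha^{(i)}$, $\boldsymbol{V}\boldsymbol{g}(\boldsymbol{x}^{(i)}) + M(\boldsymbol{1}-\boldsymbol{\delta}^{(i)}) \ge \boldsymbol{1}\alpha^{(i)}$, $\sum_{k=1}^{p_1}\boldsymbol{\delta}^{(i)}_k = 1$, $\boldsymbol{\delta}^{(i)}\in\{0,1\}^{p_1}$, $\boldsymbol{W}\boldsymbol{h}(\boldsymbol{x}^{(i)}) \le \boldsymbol{1}\beta^{(i)}$,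 $\boldsymbol{W}\boldsymbol{h}(\boldsymbol{x}^{(i)}) + M(\boldsymbol{1}-\boldsymbol{\gamma}^{(i)}) \ge \boldsymbol{1}\beta^{(i)}$, $\sum_{k=1}^{p_2}\boldsymbol{\gamma}^{(i)}_k = 1$, $\boldsymbol{\gamma}^{(i)}\in\{0,1\}^{p_2}$. Then there exists an optimal solution of this problem satisfying $$\boldsymbol{\delta}^{(i)}_k = 0 \ \text{ for all } i\in\{1,\dots,p_1-1\},\ k\in\{i+1,\dots,p_1\},$$ $$\boldsymbol{\gamma}^{(i)}_k = 0 \ \text{ for all } i\in\{1,\dots,p_2-1\},\ k\in\{i+1,\dots,p_2\},$$ i.e., $\boldsymbol{\delta}^{(1)}_{2:p_1}=\boldsymbol{0}, \boldsymbol{\delta}^{(2)}_{3:p_1}=\boldsymbol{0},\dots,\boldsymbol{\delta}^{(p_1-1)}_{p_1}=0$ and $\boldsymbol{\gamma}^{(1)}_{2:p_2}=\boldsymbol{0},\dots,\boldsymbol{\gamma}^{(p_2-1)}_{p_2}=0$.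
   Context: $\boldsymbol{V}_j$ denotes the $j$-th row of $\boldsymbol{V}$; $\boldsymbol{\delta}^{(i)}_k$ the $k$-th entry of $\boldsymbol{\delta}^{(i)}$ and $\boldsymbol{\delta}^{(i)}_{a:b}$ the subvector of entries $a$ through $b$; $\boldsymbol{1}$ the all-ones vector; vector inequalities are componentwise. *)

From HB Require Import structures.
From mathcomp Require Import all_boot all_order all_algebra.
From mathcomp Require Import all_classical all_reals all_analysis.
Set Implicit Arguments. Unset Strict Implicit. Unset Printing Implicit Defensive.
Import Order.TTheory GRing.Theory Num.Theory.
Import numFieldNormedType.Exports.
Local Open Scope ring_scope.

Section MIQP.
Variables (R : realType) (n ND p1 r1 p2 r2 : nat).

(* Data point i (0-based, i : 'I_ND) is x i; delta i k is the k-th entry of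
   delta^(i) (row i of the ND x p1 matrix delta); similarly for gamma. *)
Definition miqp_feasible (x : 'I_ND -> 'cV[R]_n)
  (g : 'cV[R]_n -> 'cV[R]_r1) (h : 'cV[R]_n -> 'cV[R]_r2) (M : R)
  (V : 'M[R]_(p1, r1)) (W : 'M[R]_(p2, r2))
  (alpha beta : 'I_ND -> R) (delta : 'M[R]_(ND, p1)) (gamma : 'M[R]_(ND, p2))
  : Prop :=
  forall i : 'I_ND,
    (forall j : 'I_p1, (V *m g (x i)) j 0 <= alpha i) /\
    (forall j : 'I_p1, (V *m g (x i)) j 0 + M * (1 - delta i j) >= alpha i) /\
    (\sum_(k < p1) delta i k = 1) /\
    (forall k : 'I_p1, delta i k = 0 \/ delta i k = 1) /\
    (forall j : 'I_p2, (W *m h (x i)) j 0 <= beta i) /\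
    (forall j : 'I_p2, (W *m h (x i)) j 0 + M * (1 - gamma i j) >= beta i) /\
    (\sum_(k < p2) gamma i k = 1) /\
    (forall k : 'I_p2, gamma i k = 0 \/ gamma i k = 1).

Definition miqp_obj (y : 'I_ND -> R) (alpha beta : 'I_ND -> R) : R :=
  \sum_(i < ND) (y i - (alpha i - beta i)) ^+ 2.

End MIQP.

(* In the big-M formulation, delta^(i) selects a row attaining the column maximum, so
   feasibility amounts to alpha^(i) = max_j (V g(x^(i)))_j together with a spread of at most M
   in that column.  Writing each row of
   V as its first row plus a difference, the differences are bounded by M and can be replaced
   by bounded pseudo-inverse preimages, while the first rows of V and W only enter through a
   vector q in a fixed row space; if q does worse than q = 0 it can be replaced by 0, otherwise
   it is bounded by the residual.  Hence every feasible point is dominated by one in a fixed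
   compact box, and the extreme value theorem gives a minimiser.  Finally, permuting the rows
   of V so that the labels of the selected rows are numbered in order of first use makes the
   label selected for data point i at most i, which is the triangular pattern of delta; the
   same holds for W and gamma. *)

From HB Require Import structures.
From mathcomp Require Import all_boot all_order all_algebra fingroup perm.
From mathcomp Require Import all_classical all_reals all_analysis.
From mathcomp Require Import ring lra.
Set Implicit Arguments. Unset Strict Implicit. Unset Printing Implicit Defensive.
Import Order.TTheory GRing.Theory Num.Theory.
Import numFieldNormedType.Exports.

Section KeyRank.
Variables (T : finType) (key : T -> nat).
Hypothesis key_inj : injective key.

Definition key_rank (j : T) : nat := #|[set j' | key j' < key j]|.

Lemma key_rank_le j : key_rank j <= key j.
Proof.
rewrite /key_rank cardE -(size_map key) -[X in _ <= X](size_iota 0).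
apply: uniq_leq_size; first by rewrite map_inj_uniq ?enum_uniq.
by move=> _ /mapP[j' + ->]; rewrite mem_enum inE mem_iota.
Qed.

Lemma key_rank_lt_card j : key_rank j < #|T|.
Proof.
have sub_j : [set j' | key j' < key j] \subset [set~ j].
  by apply/fintype.subsetP => j'; rewrite !inE; apply: contraTneq => ->; rewrite ltnn.
apply: leq_ltn_trans (subset_leq_card sub_j) _.
by rewrite cardsC1 prednK //; apply/card_gt0P; exists j.
Qed.

Lemma key_rank_mono j j' : key j < key j' -> key_rank j < key_rank j'.
Proof.
move=> lt_jj'; rewrite /key_rank.
have notin_j : j \notin [set j'' | key j'' < key j] by rewrite inE ltnn.
have := cardsU1 j [set j'' | key j'' < key j]; rewrite notin_j add1n => <-.
apply/subset_leq_card/fintype.subsetP => j''; rewrite !inE => /orP[/eqP-> // | lt_j''j].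
exact: ltn_trans lt_j''j lt_jj'.
Qed.

Lemma key_rank_inj : injective key_rank.
Proof.
move=> j j' eq_rank; apply: key_inj.
by case: (ltngtP (key j) (key j')) => // /key_rank_mono; rewrite eq_rank ltnn.
Qed.

End KeyRank.

Lemma perm_first_occurrence (N p : nat) (f : 'I_N -> 'I_p) :
  exists s : {perm 'I_p}, forall i, s (f i) <= i.
Proof.
pose used := [seq f i | i <- enum 'I_N].
(* Labels are keyed by their first occurrence in [f], the unused ones coming last. *)
pose key j := index j (used ++ enum 'I_p).
have key_inj : injective key.
  have in_s j : j \in used ++ enum 'I_p by rewrite mem_cat mem_enum orbT.
  by move=> j j'; apply: (index_inj j (in_s j) (in_s j')).
have key_f i : key (f i) <= i.
  have used_i : nth (f i) used i = f i.
    by rewrite (nth_map i) ?size_enum_ord // nth_ord_enum.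
  have used_f : f i \in used by rewrite map_f ?mem_enum.
  rewrite /key index_cat used_f -{1}used_i.
  by apply: index_nth; rewrite size_map size_enum_ord.
have rank_lt j : key_rank key j < p by have := key_rank_lt_card key j; rewrite card_ord.
have rank_inj : injective (fun j => Ordinal (rank_lt j)).
  by move=> j j' /(congr1 val) /key_rank_inj; apply.
by exists (perm rank_inj) => i; rewrite permE (leq_trans (key_rank_le _ _)).
Qed.

Local Open Scope ring_scope.

Section ColumnMax.
Variables (R : realDomainType) (p N : nat).
Implicit Types (U : 'M[R]_(p.+1, N)).

Definition colmax U (i : 'I_N) : R := \big[Num.max/U ord0 i]_j U j i.

Lemma colmax_ge U i j : U j i <= colmax U i.
Proof. exact: (le_bigmax _ (fun j => U j i)). Qed.

Lemma colmax_le U i a : (forall j, U j i <= a) -> colmax U i <= a.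
Proof. by move=> le_a; rewrite /colmax bigmax_le. Qed.

Lemma colmax_attained U i : exists j, colmax U i = U j i.
Proof.
apply: (big_ind (fun v => exists j, v = U j i)); first by exists ord0.
  by move=> _ _ [j ->] [j' ->]; case: (leP (U j i) (U j' i)); [exists j'|exists j].
by move=> j _; exists j.
Qed.

Lemma colmax_sub_row0_ge0 U i : 0 <= colmax U i - U 0 i.
Proof. by rewrite subr_ge0 colmax_ge. Qed.

Lemma colmax_shift U U' i c :
  (forall j, U' j i = c + U j i) -> colmax U' i = c + colmax U i.
Proof.
move=> U'E; apply: le_anti; rewrite colmax_le => [|j]; last by rewrite U'E lerD2l colmax_ge.
by have [j ->] := colmax_attained U i; rewrite -U'E colmax_ge.
Qed.

End ColumnMax.

Section MaxEncoding.
Variables (R : realDomainType) (N p : nat) (M : R).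

Definition max_encoded (U : 'I_p -> 'I_N -> R) (al : 'I_N -> R) (de : 'M[R]_(N, p)) : Prop :=
  forall i : 'I_N,
    (forall j, U j i <= al i) /\
    (forall j, U j i + M * (1 - de i j) >= al i) /\
    (\sum_(k < p) de i k = 1) /\
    (forall k, de i k = 0 \/ de i k = 1).

Lemma eq_max_encoded (U U' : 'I_p -> 'I_N -> R) al de :
  (forall j i, U j i = U' j i) -> max_encoded U al de -> max_encoded U' al de.
Proof.
move=> UE enc i; have [le_al [ge_al rest]] := enc i.
by split; [|split=> //] => j; rewrite -UE.
Qed.

Definition column_spread_le (U : 'M[R]_(p, N)) : Prop :=
  forall i j k, U k i - U j i <= M.

Definition selector_mx (f : 'I_N -> 'I_p) : 'M[R]_(N, p) :=
  \matrix_(i, k) (k == f i)%:R.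

Lemma max_encoded_selects U al de i :
  max_encoded U al de -> exists j, de i j = 1.
Proof.
move=> /(_ i) [_ [_ [sum1 bin]]].
case: (pickP (fun k => de i k == 1)) => [j /eqP|no1]; first by exists j.
suff : \sum_(k < p) de i k = 0 by rewrite sum1 => /eqP; rewrite oner_eq0.
by apply: big1 => k _; case: (bin k) => // /eqP; rewrite no1.
Qed.

Lemma max_encoded_selector U al (f : 'I_N -> 'I_p) :
  column_spread_le U -> (forall i j, U j i <= al i) ->
  (forall i, U (f i) i = al i) -> max_encoded U al (selector_mx f).
Proof.
move=> spread le_al fmax i; split; first exact: le_al.
split=> [j|]; last split=> [|k]; rewrite ?mxE.
- have [->|ne_j] := eqVneq j (f i); first by rewrite subrr mulr0 addr0 fmax.
  by rewrite subr0 mulr1 -fmax -lerBlDl spread.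
- by rewrite (bigD1 (f i)) //= big1 => [|k /negbTE ne_k]; rewrite mxE ?eqxx ?ne_k ?addr0.
- by case: eqP; [right|left].
Qed.

End MaxEncoding.
Arguments selector_mx {R N p}.

Section MaxEncodingColmax.
Variables (R : realDomainType) (N p : nat) (M : R).
Implicit Types (U : 'M[R]_(p.+1, N)).

Lemma colmax_sub_row0_le U i : column_spread_le M U -> colmax U i - U 0 i <= M.
Proof. by move=> spread; rewrite lerBlDl colmax_le // => j; rewrite -lerBlDl spread. Qed.

Lemma max_encoded_colmax U al de :
  0 <= M -> max_encoded M U al de -> al =1 colmax U /\ column_spread_le M U.
Proof.
move=> M_ge0 enc; split=> [i|i j k].
  have [j de1] := max_encoded_selects i enc; have [le_al [ge_al _]] := enc i.
  apply: le_anti; apply/andP; split; last exact: colmax_le.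
  by have := ge_al j; rewrite de1 subrr mulr0 addr0 => /le_trans; apply; exact: colmax_ge.
have [le_al [ge_al [_ bin]]] := enc i.
rewrite lerBlDl (le_trans (le_al k)) // (le_trans (ge_al j)) // lerD2l.
by case: (bin j) => ->; rewrite ?subr0 ?mulr1 ?subrr ?mulr0.
Qed.

Lemma max_encoded_triangular U :
  column_spread_le M U ->
  exists (s : {perm 'I_p.+1}) (de : 'M[R]_(N, p.+1)),
    max_encoded M (row_perm s U) (colmax U) de /\
    forall (i : 'I_N) (k : 'I_p.+1), (i < k)%N -> de i k = 0.
Proof.
move=> spread.
have [f fmax] : exists f : 'I_N -> 'I_p.+1, forall i, U (f i) i = colmax U i.
  apply: (@fin_all_exists _ _ (fun i j => U j i = colmax U i)) => i.
  by have [j ->] := colmax_attained U i; exists j.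
have [t t_le] := perm_first_occurrence f.
exists t^-1%g, (selector_mx (fun i => t (f i))); split.
  by apply: max_encoded_selector => [i j k|i j|i]; rewrite /row_perm !mxE ?permK ?colmax_ge.
move=> i k lt_ik; rewrite mxE; case: eqP => // k_tf.
by move: lt_ik; rewrite k_tf ltnNge t_le.
Qed.

End MaxEncodingColmax.

Lemma bounded_preimage (R : realFieldType) (r N : nat) (A : 'M[R]_(r, N)) :
  exists2 c : R, 0 <= c & forall m (D : 'M[R]_(m, N)) (b : R),
    0 <= b -> (D <= A)%MS -> (forall j i, `|D j i| <= b) ->
    exists2 X : 'M[R]_(m, r), X *m A = D & forall j k, `|X j k| <= c * b.
Proof.
pose P := pinvmx A; exists (\sum_l \sum_k `|P l k|) => [|m D b b_ge0 DA Db].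
  by do 2![apply: sumr_ge0 => ? _].
exists (D *m P) => [|j k]; first exact: mulmxKpV.
rewrite mxE (le_trans (ler_norm_sum _ _ _)) // mulr_suml.
apply: ler_sum => l _; rewrite normrM mulrC ler_pM ?normr_ge0 //.
by rewrite (bigD1 k) //= lerDl sumr_ge0.
Qed.

Lemma shift_rows (R : realFieldType) (N p r : nat) (A : 'M[R]_(r, N)) (M : R) :
  0 <= M -> exists2 c : R, 0 <= c & forall (V : 'M[R]_(p.+1, r)) (v : 'rV[R]_r),
    column_spread_le M (V *m A) ->
    exists V2 : 'M[R]_(p.+1, r),
      [/\ column_spread_le M (V2 *m A),
          forall i, colmax (V2 *m A) i =
                    (v *m A) 0 i + (colmax (V *m A) i - (V *m A) 0 i)
        & forall j k, `|V2 j k| <= `|v 0 k| + c * M].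
Proof.
move=> M_ge0; have [c c_ge0 pre] := bounded_preimage A; exists c => // V v spread.
pose D := \matrix_(j, i) ((V *m A) j i - (V *m A) 0 i).
have DA : (D <= A)%MS.
  suff -> : D = (V - \matrix_(j, k) V 0 k) *m A by exact: submxMl.
  apply/matrixP => j i; rewrite mulmxBl !mxE; congr (_ - _).
  by apply: eq_bigr => k _; rewrite mxE.
have Db j i : `|D j i| <= M.
  by rewrite mxE ler_norml; have := spread i j 0; have := spread i 0 j; lra.
have [X XA Xb] := pre _ D M M_ge0 DA Db.
pose V2 := \matrix_(j, k) v 0 k + X.
have V2A j i : (V2 *m A) j i = (v *m A) 0 i + ((V *m A) j i - (V *m A) 0 i).
  rewrite mulmxDl XA !mxE; congr (_ + _).
  by apply: eq_bigr => k _; rewrite mxE.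
exists V2; split=> [i j k|i|j k].
- by rewrite !V2A; have := spread i j k; lra.
- rewrite (colmax_shift (U := V *m A) (c := (v *m A) 0 i - (V *m A) 0 i)) => [|j].
    by ring.
  by rewrite V2A; ring.
- by rewrite !mxE (le_trans (ler_normD _ _)) // lerD2l Xb.
Qed.

Lemma norm_le_sqr_add1 (R : realDomainType) (x : R) : `|x| <= 1 + x ^+ 2.
Proof. by rewrite -real_normK ?num_real //; have := normr_ge0 x; nra. Qed.

Lemma sqr_le_sum (R : realDomainType) (N : nat) (e : 'I_N -> R) i :
  e i ^+ 2 <= \sum_j e j ^+ 2.
Proof. by rewrite (bigD1 i) //= lerDl sumr_ge0 // => j _; rewrite sqr_ge0. Qed.

Lemma competitor_near_origin (R : realFieldType) (N : nat) (a : 'I_N -> R) (q : 'rV[R]_N) :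
  exists q' : 'rV[R]_N,
    [/\ q' = q \/ q' = 0,
        \sum_i (a i - q' 0 i) ^+ 2 <= \sum_i (a i - q 0 i) ^+ 2
      & forall i, `|q' 0 i| <= `|a i| + 1 + \sum_j a j ^+ 2].
Proof.
have [le_a|lt_a] := leP (\sum_i (a i - q 0 i) ^+ 2) (\sum_i a i ^+ 2).
  exists q; split=> // [|i]; first by left.
  have le_q : `|q 0 i| <= `|a i| + `|a i - q 0 i|.
    by rewrite -[X in `|X|](subKr (a i)) ler_normB.
  have := norm_le_sqr_add1 (a i - q 0 i).
  have := sqr_le_sum (fun j => a j - q 0 j) i; lra.
exists 0; split; first by right.
  by rewrite (eq_bigr (fun i => a i ^+ 2)) ?(ltW lt_a) // => i _; rewrite mxE subr0.
move=> i; rewrite mxE normr0; apply: addr_ge0; first by rewrite addr_ge0.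
by apply: sumr_ge0 => j _; exact: sqr_ge0.
Qed.

Lemma bounded_competitor (R : realFieldType) (r N : nat) (C : 'M[R]_(r, N)) (K : R) :
  0 <= K -> exists B : R, forall (a : 'I_N -> R) (u : 'rV[R]_r), (forall i, `|a i| <= K) ->
    exists2 t : 'rV[R]_r, (forall k, `|t 0 k| <= B) &
      \sum_i (a i - (t *m C) 0 i) ^+ 2 <= \sum_i (a i - (u *m C) 0 i) ^+ 2.
Proof.
move=> K_ge0; have [c c_ge0 pre] := bounded_preimage C.
pose Q := K + 1 + \sum_(i < N) K ^+ 2.
have Q_ge0 : 0 <= Q by rewrite !addr_ge0 // sumr_ge0 // => i _; rewrite sqr_ge0.
exists (c * Q) => a u a_le.
have [q [qE le_q qb]] := competitor_near_origin a (u *m C).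
have qC : (q <= C)%MS by case: qE => ->; [exact: submxMl|exact: sub0mx].
have qQ j i : `|q j i| <= Q.
  rewrite ord1 (le_trans (qb i)) // !lerD ?a_le // ler_sum // => l _.
  by rewrite -real_normK ?num_real // lerXn2r ?nnegrE.
have [t tC tb] := pre _ q Q Q_ge0 qC qQ.
by exists t => [k|]; [exact: tb|rewrite tC].
Qed.

Local Open Scope classical_set_scope.

Section Continuity.
Variables (R : realType) (T : topologicalType).

Lemma continuous_colmax (p N : nat) (F : T -> 'M[R]_(p.+1, N)) i :
  (forall j, continuous (fun z => F z j i)) -> continuous (fun z => colmax (F z) i).
Proof.
move=> Fc; rewrite /colmax; elim: (index_enum _) => [|j r IHr].
  by under eq_fun do rewrite big_nil; exact: Fc.
under eq_fun do rewrite big_cons.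
exact: (max_fun_continuous (Fc j) IHr).
Qed.

Lemma continuous_mulmx_entry (m r N : nat) (F : T -> 'M[R]_(m, r)) (A : 'M[R]_(r, N)) j i :
  (forall j k, continuous (fun z => F z j k)) -> continuous (fun z => (F z *m A) j i).
Proof.
move=> Fc; under eq_fun do rewrite mxE.
apply: continuous_big => [|k _ z]; first exact: add_continuous.
by apply: continuousM; [exact: Fc|exact: cst_continuous].
Qed.

Lemma closed_column_spread_le (p N : nat) (M : R) (F : T -> 'M[R]_(p, N)) :
  (forall j i, continuous (fun z => F z j i)) ->
  closed [set z | column_spread_le M (F z)].
Proof.
move=> Fc.
have -> : [set z | column_spread_le M (F z)] =
    \bigcap_(i in setT) \bigcap_(j in setT) \bigcap_(k in setT)
      ((fun z => F z k i - F z j i) @^-1` [set x | x <= M]).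
  by apply/seteqP; split=> [z spread i _ j _ k _|z spread i j k]; [exact: spread|exact: spread].
do 3!(apply: closed_bigI => ? _); apply: preimage_closed => [z _|]; last exact: closed_le.
by apply: continuousB; [exact: Fc|exact: Fc].
Qed.

Lemma continuous_miqp_obj (N : nat) (y : 'I_N -> R) (al be : T -> 'I_N -> R) :
  (forall i, continuous (fun z => al z i)) -> (forall i, continuous (fun z => be z i)) ->
  continuous (fun z => miqp_obj y (al z) (be z)).
Proof.
move=> alc bec; apply: continuous_big => [|i _ z]; first exact: add_continuous.
have term_cont : {for z, continuous (fun z => y i - (al z i - be z i))}.
  apply: continuousB; first exact: cst_continuous.
  by apply: continuousB; [exact: alc|exact: bec].
exact: (continuousM term_cont term_cont).
Qed.

End Continuity.

Section PairProblem.
Variables (R : realType) (N p1 r1 p2 r2 : nat).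
Variables (Gm : 'M[R]_(r1, N)) (Hm : 'M[R]_(r2, N)) (y : 'I_N -> R) (M : R).
Hypothesis M_ge0 : 0 <= M.

Definition pair_feasible (V : 'M[R]_(p1.+1, r1)) (W : 'M[R]_(p2.+1, r2)) : Prop :=
  column_spread_le M (V *m Gm) /\ column_spread_le M (W *m Hm).

Definition pair_value (V : 'M[R]_(p1.+1, r1)) (W : 'M[R]_(p2.+1, r2)) : R :=
  miqp_obj y (colmax (V *m Gm)) (colmax (W *m Hm)).

Lemma bounded_improvement : exists B : R, forall V W, pair_feasible V W ->
  exists V2 W2, [/\ pair_feasible V2 W2, forall j k, `|V2 j k| <= B,
                    forall j k, `|W2 j k| <= B & pair_value V2 W2 <= pair_value V W].
Proof.
have [cG cG_ge0 shiftG] := shift_rows p1 Gm M_ge0.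
have [cH cH_ge0 shiftH] := shift_rows p2 Hm M_ge0.
pose K := \sum_i `|y i| + M.
have K_ge0 : 0 <= K by rewrite addr_ge0 // sumr_ge0.
have [B competitor] := bounded_competitor (col_mx Gm Hm) K_ge0.
exists (B + cG * M + cH * M) => V W [spreadV spreadW].
pose mV i := colmax (V *m Gm) i - (V *m Gm) 0 i.
pose mW i := colmax (W *m Hm) i - (W *m Hm) 0 i.
pose a i := y i - mV i + mW i.
have a_le i : `|a i| <= K.
  have := colmax_sub_row0_ge0 (V *m Gm) i; have := colmax_sub_row0_le i spreadV.
  have := colmax_sub_row0_ge0 (W *m Hm) i; have := colmax_sub_row0_le i spreadW.
  rewrite -/(mV i) -/(mW i) /a /K => *.
  rewrite -addrA (le_trans (ler_normD _ _)) // lerD //.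
    by rewrite (bigD1 i) //= lerDl sumr_ge0.
  by rewrite ler_norml; lra.
pose u := row_mx (row 0 V) (- row 0 W).
have [t tb le_t] := competitor a u a_le.
have [V2 [spreadV2 colV2 V2b]] := shiftG V (lsubmx t) spreadV.
have [W2 [spreadW2 colW2 W2b]] := shiftH W (- rsubmx t) spreadW.
have valueE (w : 'rV[R]_(r1 + r2)) V' W' :
    (forall i, colmax (V' *m Gm) i - colmax (W' *m Hm) i = (w *m col_mx Gm Hm) 0 i + mV i - mW i) ->
    pair_value V' W' = \sum_i (a i - (w *m col_mx Gm Hm) 0 i) ^+ 2.
  by move=> colE; apply: eq_bigr => i _; rewrite colE /a; congr (_ ^+ 2); ring.
exists V2, W2; split=> // [j k|j k|].
- rewrite (le_trans (V2b j k)) // mxE -addrA lerD ?tb //.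
  by rewrite lerDl mulr_ge0.
- rewrite (le_trans (W2b j k)) // !mxE normrN -addrA lerD ?tb //.
  by rewrite lerDr mulr_ge0.
rewrite (valueE t V2 W2) ?(valueE u V W) // => i.
  by rewrite mul_row_col /mV /mW mulNmx -!row_mul !mxE; ring.
by rewrite colV2 colW2 -{3}(hsubmxK t) mul_row_col /mV /mW mulNmx !mxE; ring.
Qed.

Let d := (p1.+1 * r1 + p2.+1 * r2)%N.

(* A pair (V, W) is packed into one row vector, on which boxes are compact by [rV_compact]. *)
Definition unpackV (z : 'rV[R]_d) : 'M[R]_(p1.+1, r1) := vec_mx (lsubmx z).
Definition unpackW (z : 'rV[R]_d) : 'M[R]_(p2.+1, r2) := vec_mx (rsubmx z).

Lemma unpack_pack V W :
  unpackV (row_mx (mxvec V) (mxvec W)) = V /\ unpackW (row_mx (mxvec V) (mxvec W)) = W.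
Proof. by rewrite /unpackV /unpackW row_mxKl row_mxKr !mxvecK. Qed.

Lemma continuous_unpackV j k : continuous (fun z => unpackV z j k).
Proof. by under eq_fun do rewrite !mxE; exact: coord_continuous. Qed.

Lemma continuous_unpackW j k : continuous (fun z => unpackW z j k).
Proof. by under eq_fun do rewrite !mxE; exact: coord_continuous. Qed.

Lemma exists_minimizer : exists V W, pair_feasible V W /\
  forall V' W', pair_feasible V' W' -> pair_value V W <= pair_value V' W'.
Proof.
have [B improve] := bounded_improvement.
pose box := [set z : 'rV[R]_d | forall l, `[- B, B]%classic (z ord0 l)].
pose D := box `&` [set z | pair_feasible (unpackV z) (unpackW z)].
have packD V W : pair_feasible V W -> (forall j k, `|V j k| <= B) -> (forall j k, `|W j k| <= B) ->
    D (row_mx (mxvec V) (mxvec W)).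
  move=> VW Vb Wb; split; last by have [VE WE] := unpack_pack V W; rewrite /= VE WE.
  move=> l; rewrite /= in_itv /= -ler_norml -(splitK l).
  case: (fintype.split l) => l' /=.
    by case/mxvec_indexP: l' => j k; rewrite row_mxEl mxvecE.
  by case/mxvec_indexP: l' => j k; rewrite row_mxEr mxvecE.
have D_compact : compact D.
  apply: compact_closedI.
    by apply: (@rV_compact _ _ (fun=> `[- B, B]%classic)) => l; exact: segment_compact.
  apply: closedI; apply: closed_column_spread_le => j i; apply: continuous_mulmx_entry => *.
    exact: continuous_unpackV.
  exact: continuous_unpackW.
have D_ne : D !=set0.
  have feas0 : pair_feasible 0 0 by split=> i j k; rewrite !mul0mx !mxE subrr.
  by have [V [W [VW Vb Wb _]]] := improve _ _ feas0; exists (row_mx (mxvec V) (mxvec W)); apply: packD.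
have value_cont : continuous (fun z => pair_value (unpackV z) (unpackW z)).
  apply: continuous_miqp_obj => i; apply: continuous_colmax => j;
    apply: continuous_mulmx_entry => *.
    exact: continuous_unpackV.
  exact: continuous_unpackW.
have [c /set_mem [_ [cV cW]] cmin] := compact_EVT_min D_ne D_compact (continuous_subspaceT value_cont).
exists (unpackV c), (unpackW c); split=> // V W VW.
have [V2 [W2 [VW2 Vb Wb le_value]]] := improve _ _ VW.
apply: le_trans le_value; have [{2}<- {2}<-] := unpack_pack V2 W2.
by apply: cmin; apply/mem_set; exact: packD.
Qed.

End PairProblem.

Section DataMatrix.
Variables (R : realType) (n N r : nat) (x : 'I_N -> 'cV[R]_n) (g : 'cV[R]_n -> 'cV[R]_r).

Definition feature_mx : 'M[R]_(r, N) := \matrix_(k, i) g (x i) k 0.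

Lemma mulmx_feature_mx (p : nat) (V : 'M[R]_(p, r)) j i :
  (V *m feature_mx) j i = (V *m g (x i)) j 0.
Proof. by rewrite !mxE; apply: eq_bigr => k _; rewrite mxE. Qed.

End DataMatrix.

Lemma miqp_feasibleE (R : realType) (n N p1 r1 p2 r2 : nat) (x : 'I_N -> 'cV[R]_n)
    (g : 'cV[R]_n -> 'cV[R]_r1) (h : 'cV[R]_n -> 'cV[R]_r2) (M : R)
    (V : 'M[R]_(p1, r1)) (W : 'M[R]_(p2, r2)) al be de ga :
  miqp_feasible x g h M V W al be de ga <->
  max_encoded M (V *m feature_mx x g) al de /\ max_encoded M (W *m feature_mx x h) be ga.
Proof.
pose UV j i := (V *m g (x i)) j 0; pose UW j i := (W *m h (x i)) j 0.
have -> : miqp_feasible x g h M V W al be de ga <->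
    max_encoded M UV al de /\ max_encoded M UW be ga.
  by split=> [F|[FV FW] i]; [split=> i; have := F i|have := FV i; have := FW i]; tauto.
have EV j i : UV j i = (V *m feature_mx x g) j i by rewrite mulmx_feature_mx.
have EW j i : UW j i = (W *m feature_mx x h) j i by rewrite mulmx_feature_mx.
split=> -[encV encW]; split.
- exact: eq_max_encoded EV encV.
- exact: eq_max_encoded EW encW.
- by apply: eq_max_encoded encV => j i; rewrite EV.
- by apply: eq_max_encoded encW => j i; rewrite EW.
Qed.

Theorem proposition1 (R : realType) (n ND p1 p2 r1 r2 : nat)
  (Hn : (0 < n)%N) (HND : (0 < ND)%N) (Hp1 : (0 < p1)%N) (Hp2 : (0 < p2)%N)
  (Hr1 : (0 < r1)%N) (Hr2 : (0 < r2)%N)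
  (Hp1ND : (p1 <= ND)%N) (Hp2ND : (p2 <= ND)%N)
  (x : 'I_ND -> 'cV[R]_n) (y : 'I_ND -> R)
  (g : 'cV[R]_n -> 'cV[R]_r1) (h : 'cV[R]_n -> 'cV[R]_r2)
  (Hg : continuous g) (Hh : continuous h)
  (M : R) (HM : 0 < M) :
  exists (V : 'M[R]_(p1, r1)) (W : 'M[R]_(p2, r2)) (alpha beta : 'I_ND -> R)
         (delta : 'M[R]_(ND, p1)) (gamma : 'M[R]_(ND, p2)),
    miqp_feasible x g h M V W alpha beta delta gamma /\
    (forall (V' : 'M[R]_(p1, r1)) (W' : 'M[R]_(p2, r2))
            (alpha' beta' : 'I_ND -> R)
            (delta' : 'M[R]_(ND, p1)) (gamma' : 'M[R]_(ND, p2)),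
        miqp_feasible x g h M V' W' alpha' beta' delta' gamma' ->
        miqp_obj y alpha beta <= miqp_obj y alpha' beta') /\
    (forall (i : 'I_ND) (k : 'I_p1),
        (i < p1.-1)%N -> (i < k)%N -> delta i k = 0) /\
    (forall (i : 'I_ND) (k : 'I_p2),
        (i < p2.-1)%N -> (i < k)%N -> gamma i k = 0).
Proof.
case: p1 Hp1 Hp1ND => // p1 _ _; case: p2 Hp2 Hp2ND => // p2 _ _.
set G := feature_mx x g; set H := feature_mx x h.
have M_ge0 := ltW HM.
have [V [W [[spreadV spreadW] Vmin]]] := exists_minimizer p1 p2 G H y M_ge0.
have [s [de [encV triV]]] := max_encoded_triangular spreadV.
have [t [ga [encW triW]]] := max_encoded_triangular spreadW.
exists (row_perm s V), (row_perm t W), (colmax (V *m G)), (colmax (W *m H)), de, ga.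
split; [|split; [|split=> i k _; [exact: triV|exact: triW]]].
  by apply/miqp_feasibleE; rewrite /G /H !row_permE -!mulmxA -!row_permE.
move=> V' W' al be de' ga' /miqp_feasibleE[/(max_encoded_colmax M_ge0)[alE spreadV']
                                          /(max_encoded_colmax M_ge0)[beE spreadW']].
have -> : miqp_obj y al be = pair_value G H y V' W'.
  by apply: eq_bigr => i _; rewrite alE beE.
exact: Vmin.
Qed.
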